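(* In the setting and construction described in the context, for every $i=1,2,\dots,t-2$ we have $|S_{i+1}|\leq |S_i|\,(1+R(4,R(4,s)))$. (More precisely, $|X_i^j|\le R(4,R(4,s))$ for every $j$.)
   Context: All graphs are finite and simple. $P_t$ is the path on $t$ vertices; $K_4$ is the complete graph on $4$ vertices; $SDK_s$ is the one-subdivision of $K_{1,s}$ (replace each edge $uv$ of the star $K_{1,s}$ by a path $u w v$ through a new vertex $w$). A graph is $\mathcal{H}$-free if it has no induced subgraph isomorphic to a member of $\mathcal{H}$. $R(k,l)$ denotes the Ramsey number: the least integer such that every graph on at least $R(k,l)$ vertices contains a clique on $k$ vertices or a stable set on $l$ vertices. For $X\subseteq V$, $N(X)=\bigcup_{v\in X}N(v)$. Setting: $s,t$ are positive integers with $t\ge 2$, and $G=(V,E)$ is a connected $(P_t,SDK_s,K_4)$-free graph. Fix a vertex $a\in V$, let $d(v)$ be the distance from $v$ to $a$, and set $S_1=\{a\}$. For $i=1,2,\dots,t-2$ define $S_{i+1}$ as follows: let $B_i=N(S_i)$ and $W_i=V\setminus(B_i\cup S_i)$; enumerate $S_i=\{v_1,\dots,v_{|S_i|}\}$ and for $j=1,\dots,|S_i|$ let $B_i^j=\{v\in B_i\setminus\bigcup_{k<j}B_i^k : v\text{ is adjacent to }v_j\}$ (so $B_i=\bigcup_j B_i^j$); for each $j$ let $X_i^j\subseteq B_i^j$ be an inclusion-minimal set such that every $w\in W_i$ with $N(w)\cap B_i^j\neq\emptyset$ satisfies $N(w)\cap X_i^j\ne\emptyset$; let $X_i=\bigcup_j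 X_i^j$ and $S_{i+1}=S_i\cup X_i$. The choices of enumeration and of minimal sets are arbitrary. *)

(* Simple graphs as symmetric irreflexive relations on a finType. *)
From mathcomp Require Import all_boot.
Set Implicit Arguments. Unset Strict Implicit. Unset Printing Implicit Defensive.

Section Defs.

Definition contains_induced (U : finType) (f : rel U) (T : finType) (e : rel T) : Prop :=
  exists g : U -> T, injective g /\ forall x y, f x y = e (g x) (g y).

Definition path_rel (t : nat) : rel 'I_t :=
  fun i j => (i.+1 == j :> nat) || (j.+1 == i :> nat).

Definition complete_rel (n : nat) : rel 'I_n := fun i j => i != j.

(* SDK_s, the one-subdivision of K_{1,s}: None is the centre u,
   Some (k,false) is the subdivision vertex w_k, Some (k,true) the leaf v_k;
   edges u - w_k - v_k. *)
Definition sdk_rel (s : nat) : rel (option ('I_s * bool)) :=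
  fun x y =>
    match x, y with
    | None, Some (_, false) => true
    | Some (_, false), None => true
    | Some (k, false), Some (l, true) => k == l
    | Some (k, true), Some (l, false) => k == l
    | _, _ => false
    end.

Definition is_clique (U : finType) (f : rel U) (A : {set U}) : Prop :=
  forall x y, x \in A -> y \in A -> x != y -> f x y.
Definition is_stable (U : finType) (f : rel U) (A : {set U}) : Prop :=
  forall x y, x \in A -> y \in A -> ~~ f x y.

Definition ramsey_prop (k l n : nat) : Prop :=
  forall (U : finType) (f : rel U), symmetric f -> irreflexive f -> n <= #|U| ->
    (exists A : {set U}, #|A| = k /\ is_clique f A) \/
    (exists A : {set U}, #|A| = l /\ is_stable f A).

Definition is_ramsey_number (k l r : nat) : Prop :=
  ramsey_prop k l r /\ forall n, ramsey_prop k l n -> r <= n.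

Variables (T : finType) (e : rel T).

Definition nbhd (A : {set T}) : {set T} := [set v | [exists u in A, e u v]].

(* B^1, B^2, ... for the enumeration vs = [v_1; v_2; ...] of S:
   B^j = { v in B \ (B^1 u ... u B^{j-1}) : v adjacent to v_j } *)
Fixpoint Bparts (B : {set T}) (vs : seq T) : seq {set T} :=
  match vs with
  | [::] => [::]
  | v :: vs' => let Bv := [set u in B | e v u] in Bv :: Bparts (B :\: Bv) vs'
  end.

Definition covers (W Bj X : {set T}) : Prop :=
  forall w, w \in W -> [exists u in Bj, e w u] -> [exists u in X, e w u].

Definition minimal_cover (W Bj X : {set T}) : Prop :=
  X \subset Bj /\ covers W Bj X /\ forall Y : {set T}, Y \proper X -> ~ covers W Bj Y.

(* one step S_i -> S_{i+1} with enumeration vs of S_i and sets X j = X_i^{j+1}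
   (j is 0-indexed) *)
Definition valid_step (S : {set T}) (vs : seq T) (X : nat -> {set T}) (S' : {set T}) : Prop :=
  [/\ uniq vs, (forall x, (x \in vs) = (x \in S)),
      (forall j, j < size vs ->
         minimal_cover (~: (nbhd S :|: S)) (nth set0 (Bparts (nbhd S) vs) j) (X j))
    & S' = S :|: \bigcup_(j < size vs) X j].

End Defs.

From mathcomp Require Import all_boot.
Set Implicit Arguments. Unset Strict Implicit. Unset Printing Implicit Defensive.

(* Only SDK_s- and K_4-freeness matter.

   Let X be an inclusion-minimal subset of B_i^j covering the relevant part of
   W_i.  By minimality every x in X has a private neighbour f x in W_i: a
   vertex adjacent to x and to no other element of X; f is injective on X.
   If |X| >= R(4,R(4,s)), Ramsey's theorem and K_4-freeness give a stable
   Y in X with |Y| = R(4,s); applied again to the images f y (y in Y) it gives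
   a stable Z in Y of size s whose private neighbours are pairwise
   non-adjacent.  Then v_j, Z and f(Z) induce SDK_s, a contradiction. *)

Lemma card_bigcup_le (T : finType) (n m : nat) (F : nat -> {set T}) :
  (forall j, j < n -> #|F j| <= m) -> #|\bigcup_(j < n) F j| <= n * m.
Proof.
elim: n => [|n IH] HF; first by rewrite big_ord0 cards0.
rewrite big_ord_recr /= mulSn addnC.
apply: leq_trans (leq_card_setU _ _) (leq_add _ (HF _ (ltnSn n))).
by apply: IH => j /ltnW; apply: HF.
Qed.

Lemma card_indexing (T : finType) (A : {set T}) (n : nat) :
  #|A| = n -> exists z : 'I_n -> T, injective z /\ forall k, z k \in A.
Proof.
move=> HA; exists (fun k => enum_val (cast_ord (esym HA) k)); split.
  by move=> k l /enum_val_inj /(congr1 val) /= kl; apply: val_inj.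
by move=> k; apply: enum_valP.
Qed.

Lemma ramsey_in_set (T : finType) (f : rel T) (k l n : nat) (X : {set T}) :
  symmetric f -> irreflexive f -> ramsey_prop k l n -> n <= #|X| ->
  (exists2 A : {set T}, A \subset X & #|A| = k /\ is_clique f A) \/
  (exists2 A : {set T}, A \subset X & #|A| = l /\ is_stable f A).
Proof.
move=> fsym firr Hram HX.
pose fU : rel {x : T | x \in X} := fun x y => f (val x) (val y).
have cardU : n <= #|{: {x : T | x \in X}}| by rewrite card_sig.
have sub (A : {set {x : T | x \in X}}) : val @: A \subset X.
  by apply/subsetP => _ /imsetP[y _ ->]; apply: valP.
have cardA (A : {set {x : T | x \in X}}) : #|val @: A| = #|A|.
  by apply: card_imset; apply: val_inj.
case: (Hram _ fU (fun x y => fsym _ _) (fun x => firr _) cardU).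
  case=> A [<- Acl]; left; exists (val @: A); rewrite ?cardA //; split => //.
  move=> _ _ /imsetP[x xA ->] /imsetP[y yA ->] Hne.
  by apply: Acl => //; apply: contraNneq Hne => ->.
case=> A [<- Ast]; right; exists (val @: A); rewrite ?cardA //; split => //.
by move=> _ _ /imsetP[x xA ->] /imsetP[y yA ->]; apply: Ast.
Qed.

Section Graph.
Variables (T : finType) (e : rel T).
Hypotheses (e_sym : symmetric e) (e_irr : irreflexive e).

Lemma induced_complete (n : nat) (A : {set T}) (h : T -> T) :
  #|A| = n -> {in A &, injective h} ->
  is_clique (fun x y => e (h x) (h y)) A -> contains_induced (@complete_rel n) e.
Proof.
move=> /card_indexing[z [zinj zA]] hinj Acl.
exists (h \o z); split=> [k l /hinj hkl|k l /=].
  by apply: zinj; apply: hkl.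
rewrite /complete_rel; have [->|kl] := eqVneq k l; first by rewrite e_irr.
by rewrite (Acl (z k) (z l)) ?(inj_eq zinj).
Qed.

Lemma free_stable_subset (k l n : nat) (X : {set T}) (h : T -> T) :
  ~ contains_induced (@complete_rel k) e -> {in X &, injective h} ->
  ramsey_prop k l n -> n <= #|X| ->
  exists2 Y : {set T}, Y \subset X & #|Y| = l /\ is_stable (fun x y => e (h x) (h y)) Y.
Proof.
move=> Kfree hinj Hram HX.
have [[A AX [Ak Acl]]|//] := ramsey_in_set (fun x y => e_sym (h x) (h y))
  (fun x => e_irr (h x)) Hram HX.
case: Kfree; apply: induced_complete Ak _ Acl.
by apply: sub_in2 hinj => x; apply: (subsetP AX).
Qed.

Definition private_nbr (X : {set T}) (x w : T) : bool :=
  e w x && [forall y in X, e w y ==> (y == x)].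

Lemma private_nbrP (X : {set T}) (x w y : T) :
  private_nbr X x w -> y \in X -> e w y -> y = x.
Proof. by case/andP=> _ /forallP /(_ y) /implyP H yX /(implyP (H yX)) /eqP. Qed.

(* Minimality of a cover X forces a private neighbour in W for each x in X:
   otherwise X :\ x would still be a cover. *)
Lemma minimal_cover_private (W Bj X : {set T}) (x : T) :
  minimal_cover e W Bj X -> x \in X -> exists2 w, w \in W & private_nbr X x w.
Proof.
move=> [_ [Xcov Xmin]] xX.
have [/existsP[w /and3P[wW wBj wX]]|noW] :=
  boolP [exists w, [&& w \in W, [exists u in Bj, e w u] & ~~ [exists u in X :\ x, e w u]]].
  have only_x y : y \in X -> e w y -> y = x.
    move=> yX wy; apply/eqP; apply: contraNT wX => yx.
    by apply/existsP; exists y; rewrite !inE yx yX.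
  exists w => //; case/existsP: (Xcov w wW wBj) => u /andP[uX wu].
  rewrite /private_nbr -(only_x u uX wu) wu; apply/forallP => y.
  by apply/implyP => yX; apply/implyP => /(only_x y yX) ->; rewrite (only_x u uX wu).
case: (Xmin (X :\ x)); first by rewrite properD1.
move=> w wW wBj; apply: contraNT noW => wX.
by apply/existsP; exists w; rewrite wW wBj wX.
Qed.

Lemma private_nbr_map (W Bj X : {set T}) :
  minimal_cover e W Bj X ->
  exists f : T -> T, forall x, x \in X -> f x \in W /\ private_nbr X x (f x).
Proof.
move=> Xmin; exists (fun x => odflt x [pick w in W | private_nbr X x w]) => x xX.
case: pickP => [w /andP[] //|none].
by have [w wW wP] := minimal_cover_private Xmin xX; move: (none w); rewrite /= wW wP.
Qed.

Lemma induced_sdk (s : nat) (v : T) (Z : {set T}) (f : T -> T) :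
  #|Z| = s ->
  (forall z, z \in Z -> [/\ e v z, e z (f z), ~~ e v (f z) & f z != v]) ->
  (forall z y, z \in Z -> y \in Z -> e (f z) y -> y = z) ->
  is_stable e Z -> is_stable (fun x y => e (f x) (f y)) Z ->
  contains_induced (@sdk_rel s) e.
Proof.
move=> /card_indexing[z [zinj zZ]] Zf fpriv Zst fZst.
have [evz ezf evf fv] : [/\ forall k, e v (z k), forall k, e (z k) (f (z k)),
    forall k, ~~ e v (f (z k)) & forall k, f (z k) != v].
  by split=> k; case: (Zf _ (zZ k)).
have ezf_eq k l : e (z k) (f (z l)) = (k == l).
  have [<-|kl] := eqVneq k l; first exact: ezf.
  apply/negbTE/negP; rewrite e_sym => /(fpriv _ _ (zZ l) (zZ k)) /zinj lk.
  by rewrite lk eqxx in kl.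
have finj k l : f (z k) = f (z l) -> k = l.
  by move=> fkl; apply/eqP; rewrite -ezf_eq -fkl.
have zf k l : z k != f (z l).
  by apply/eqP => zkl; move: (ezf l); rewrite -zkl (negbTE (Zst _ _ (zZ l) (zZ k))).
have vz k : z k != v by apply: contraTneq (evz k) => ->; rewrite e_irr.
pose g (x : option ('I_s * bool)) :=
  if x is Some (k, b) then (if b then f (z k) else z k) else v.
exists g; split.
  case=> [[k [|]]|] [[l [|]]|] //= gkl; first by rewrite (finj _ _ gkl).
  - by case/eqP: (zf l k).
  - by case/eqP: (fv k).
  - by case/eqP: (zf k l).
  - by rewrite (zinj _ _ gkl).
  - by case/eqP: (vz k).
  - by case/eqP: (fv l).
  - by case/eqP: (vz l).
case=> [[k [|]]|] [[l [|]]|] /=.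
- by rewrite (negbTE (fZst _ _ (zZ k) (zZ l))).
- by rewrite e_sym ezf_eq eq_sym.
- by rewrite e_sym (negbTE (evf k)).
- by rewrite ezf_eq.
- by rewrite (negbTE (Zst _ _ (zZ k) (zZ l))).
- by rewrite e_sym evz.
- by rewrite (negbTE (evf l)).
- by rewrite evz.
- by rewrite e_irr.
Qed.

Lemma minimal_cover_card_lt (s r m : nat) (W Bj X : {set T}) (v : T) :
  ~ contains_induced (@sdk_rel s) e -> ~ contains_induced (@complete_rel 4) e ->
  ramsey_prop 4 s r -> ramsey_prop 4 r m ->
  minimal_cover e W Bj X ->
  (forall u, u \in Bj -> e v u /\ u \notin W) -> v \notin W ->
  (forall w, w \in W -> ~~ e v w) ->
  #|X| < m.
Proof.
move=> SDKfree K4free Rs Rr Xmin vBj vW vWnot.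
have [f Xf] := private_nbr_map Xmin.
have fpriv x y : x \in X -> y \in X -> e (f x) y -> y = x.
  by move=> /Xf[_ xf]; apply: private_nbrP xf.
have efx x : x \in X -> e (f x) x by case/Xf=> _ /andP[].
have finj : {in X &, injective f}.
  by move=> x y xX yX fxy; apply: (fpriv y x yX xX); rewrite -fxy efx.
rewrite ltnNge; apply/negP => mX.
have [Y YX [Yr Yst]] := @free_stable_subset _ _ _ _ id K4free
  (in2W (fun x y => id)) Rr mX.
have sub_inj : {in Y &, injective f}.
  by apply: sub_in2 finj => x; apply: (subsetP YX).
have [Z ZY [Zs fZst]] := free_stable_subset K4free sub_inj Rs (eq_leq (esym Yr)).
have ZX z : z \in Z -> z \in X by move=> zZ; apply: (subsetP YX); apply: (subsetP ZY).
apply: SDKfree; apply: (induced_sdk (v := v) Zs) fZst.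
- move=> z zZ; have zX := ZX z zZ; have [fzW _] := Xf z zX.
  split; first by case: (vBj z (subsetP (proj1 Xmin) z zX)).
  + by rewrite e_sym efx.
  + exact: vWnot fzW.
  + by apply: contraNneq vW => <-.
- by move=> z y /ZX zX /ZX yX; apply: fpriv.
- by move=> x y /(subsetP ZY) xY /(subsetP ZY) yY; apply: Yst.
Qed.

Lemma Bparts_centre (B : {set T}) (vs : seq T) (j : nat) :
  j < size vs -> exists2 v, v \in vs &
    forall u, u \in nth set0 (Bparts e B vs) j -> e v u && (u \in B).
Proof.
elim: vs B j => [|v vs IH] B [|j] //= jvs.
  by exists v; rewrite ?mem_head // => u; rewrite inE andbC.
have [w wvs Hw] := IH (B :\: [set u in B | e v u]) j jvs.
exists w; first by rewrite inE wvs orbT.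
by move=> u /Hw /andP[-> /setDP[]].
Qed.

(* In one construction step each X^j has fewer than R(4,R(4,s)) elements:
   the part B^j and its centre v_j satisfy the hypotheses of
   minimal_cover_card_lt with W = V \ (N(S) u S). *)
Lemma valid_step_cover_lt (s r m : nat) (S S' : {set T}) (vs : seq T)
    (X : nat -> {set T}) (j : nat) :
  ~ contains_induced (@sdk_rel s) e -> ~ contains_induced (@complete_rel 4) e ->
  ramsey_prop 4 s r -> ramsey_prop 4 r m ->
  valid_step e S vs X S' -> j < size vs -> #|X j| < m.
Proof.
move=> SDKfree K4free Rs Rr [_ mem_vs Xcov _] jvs.
have [v v_vs vBj] := Bparts_centre (nbhd e S) jvs.
have vS : v \in S by rewrite -mem_vs.
apply: (minimal_cover_card_lt (v := v) SDKfree K4free Rs Rr (Xcov j jvs))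
  => [u||w].
- by case/vBj/andP=> -> uN; rewrite in_setC negbK in_setU uN.
- by rewrite !inE vS orbT.
- rewrite !inE negb_or => /andP[wN _]; apply: contra wN => evw.
  by apply/existsP; exists v; rewrite vS.
Qed.

Lemma valid_step_card (S S' : {set T}) (vs : seq T) (X : nat -> {set T}) (m : nat) :
  valid_step e S vs X S' -> (forall j, j < size vs -> #|X j| <= m) ->
  #|S'| <= #|S| * (1 + m).
Proof.
move=> [vs_uniq mem_vs _ ->] Xm.
have size_vs : size vs = #|S|.
  by rewrite -(card_uniqP vs_uniq); apply: eq_card => x; rewrite mem_vs.
apply: leq_trans (leq_card_setU _ _) _.
by rewrite mulnDr muln1 leq_add2l -size_vs card_bigcup_le.
Qed.

End Graph.

Theorem lemma3p1 (s t : nat) (T : finType) (e : rel T)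
  (R4s R4R4s : nat) (a : T)
  (S : nat -> {set T}) (vs : nat -> seq T) (X : nat -> nat -> {set T}) :
  0 < s -> 2 <= t ->
  symmetric e -> irreflexive e ->
  (forall x y, connect e x y) ->
  ~ contains_induced (@path_rel t) e ->
  ~ contains_induced (@sdk_rel s) e ->
  ~ contains_induced (@complete_rel 4) e ->
  is_ramsey_number 4 s R4s ->
  is_ramsey_number 4 R4s R4R4s ->
  S 1 = [set a] ->
  (forall i, 1 <= i <= t - 2 -> valid_step e (S i) (vs i) (X i) (S i.+1)) ->
  forall i, 1 <= i <= t - 2 ->
    #|S i.+1| <= #|S i| * (1 + R4R4s) /\
    (forall j, j < size (vs i) -> #|X i j| <= R4R4s).
Proof.
move=> _ _ e_sym e_irr _ _ SDKfree K4free [Rs _] [Rr _] _ step i irange.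
have Xsmall j : j < size (vs i) -> #|X i j| <= R4R4s.
  move=> jvs; apply/ltnW.
  exact: (valid_step_cover_lt e_sym e_irr SDKfree K4free Rs Rr (step i irange)).
by split=> //; apply: valid_step_card (step i irange) Xsmall.
Qed.
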